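(* Let $\mathbb F$ be a field that is not the field with two elements. The problem of classifying, up to isomorphism of Lie algebras, the Lie algebras $\mathrm L(V)$, where $V\subset\mathbb F^{n\times n}$ ($n=1,2,\dots$) is a two-dimensional vector space of pairwise commuting matrices, is wild.
   Context: For a vector space $V\subset\mathbb F^{n\times n}$ of commuting matrices, $\widetilde V$ denotes the space of all $(n+1)\times(n+1)$ matrices $\begin{bmatrix}A&a\\0&0\end{bmatrix}$ with $A\in V$, $a\in\mathbb F^n$; $\mathrm L(V)$ is $\widetilde V$ with Lie bracket $[u,v]=uv-vu$. A classification problem (a set $\mathcal M_1$ of objects given by tuples of matrices, with an equivalence given by admissible transformations $\mathcal M_2$) is wild if there is a tuple $M(x,y)=(M_1(x,y),\dots,M_t(x,y))$ of matrices whose entries are noncommutative polynomials in $x,y$ over $\mathbb F$ such that (i) $M(A,B)$ gives an object of the problem for all $A,B\in\mathbb F^{n\times n}$, $n\ge1$ (scalars $\alpha$ replaced by $\alpha I_n$), and (ii) $M(A,B)$ and $M(A',B')$ give equivalent objects iff $(A,B)$ and $(A',B')$ are similar, i.e. $(S^{-1}AS,S^{-1}BS)=(A',B')$ for some nonsingular $S$. *)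

From HB Require Import structures.
From mathcomp Require Import all_boot all_order all_algebra.
Set Implicit Arguments. Unset Strict Implicit. Unset Printing Implicit Defensive.
Import GRing.Theory.
Local Open Scope ring_scope.

Inductive ncpoly (F : Type) : Type :=
  | NCc of F
  | NCx
  | NCy
  | NCadd of ncpoly F & ncpoly F
  | NCmul of ncpoly F & ncpoly F.
Arguments NCx {F}. Arguments NCy {F}.

Fixpoint nceval (F : fieldType) (n : nat) (A B : 'M[F]_n) (p : ncpoly F)
  : 'M[F]_n :=
  match p with
  | NCc c => c%:M
  | NCx => A
  | NCy => B
  | NCadd p q => nceval A B p + nceval A B q
  | NCmul p q => nceval A B p *m nceval A B q
  end.

(* A k x k matrix of noncommutative polynomials (entries indexed by nat,
   only indices < k matter), evaluated at (A,B) with A,B of size n.+1: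
   the resulting block matrix has size k * n.+1, block (i,j) = M i j (A,B). *)
Definition ncmx_eval (F : fieldType) (k n : nat)
  (M : nat -> nat -> ncpoly F) (A B : 'M[F]_n.+1) : 'M[F]_(k * n.+1) :=
  \matrix_(r, c) (nceval A B (M (r %/ n.+1)%N (c %/ n.+1)%N))
                   (inord (r %% n.+1)) (inord (c %% n.+1)).

(* Membership in L(V) for V = span(P, Q):
   matrices [A a; 0 0] with A in V, a in F^N. *)
Definition inL (F : fieldType) (N : nat) (P Q : 'M[F]_N)
  (X : 'M[F]_(N + 1)) : Prop :=
  exists (a b : F) (v : 'cV[F]_N),
    X = block_mx (a *: P + b *: Q) v (0 : 'M[F]_(1, N)) (0 : 'M[F]_(1, 1)).

Definition lie (F : fieldType) (m : nat) (X Y : 'M[F]_m) : 'M[F]_m :=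
  X *m Y - Y *m X.

Definition LieIso (F : fieldType) (N N' : nat)
  (P Q : 'M[F]_N) (P' Q' : 'M[F]_N') : Prop :=
  exists f : 'M[F]_(N + 1) -> 'M[F]_(N' + 1),
    [/\ (forall X, inL P Q X -> inL P' Q' (f X)),
        (forall (c : F) X Y, inL P Q X -> inL P Q Y ->
            f (c *: X + Y) = c *: f X + f Y),
        (forall X Y, inL P Q X -> inL P Q Y ->
            f (lie X Y) = lie (f X) (f Y)),
        (forall X Y, inL P Q X -> inL P Q Y -> f X = f Y -> X = Y)
      & (forall Z, inL P' Q' Z -> exists2 X, inL P Q X & f X = Z)].

(* An object of the problem: a basis (P, Q) of a two-dimensional space V
   of pairwise commuting matrices. *)
Definition comm2_obj (F : fieldType) (N : nat) (P Q : 'M[F]_N) : Prop :=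
  P *m Q = Q *m P /\
  (forall a b : F, a *: P + b *: Q = 0 -> a = 0 /\ b = 0).

Definition similar_pair (F : fieldType) (n : nat) (A B A' B' : 'M[F]_n) : Prop :=
  exists2 S : 'M[F]_n, S \in unitmx &
    invmx S *m A *m S = A' /\ invmx S *m B *m S = B'.

Definition comm2_Lie_wild (F : fieldType) : Prop :=
  exists (k : nat) (M1 M2 : nat -> nat -> ncpoly F),
    (forall n (A B : 'M[F]_n.+1),
        comm2_obj (ncmx_eval k M1 A B) (ncmx_eval k M2 A B)) /\
    (forall n (A B A' B' : 'M[F]_n.+1),
        LieIso (ncmx_eval k M1 A B) (ncmx_eval k M2 A B)
               (ncmx_eval k M1 A' B') (ncmx_eval k M2 A' B')
        <-> similar_pair A B A' B').

(* Encode the pair (A, B) into a pair (P, Q) of 7 x 7 block matrices, the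
   (3,0) blocks of P^2, PQ and Q^2 being 1, A and B.  The pair (P, Q) satisfies
   relations (wild_pair) which force a joint eigenvector of P, Q to have
   eigenvalues in {0, 1} and forbid it to be (1, 1); as P^3 and Q^3 P are joint
   eigenvectors for (1, 0) and (0, 1), the only bases of V = span(P, Q) obeying
   the relations are (P, Q) itself and, a priori, (Q, P), which is excluded.

   A Lie isomorphism L(V) -> L(V') maps the ideal of matrices [0 w; 0 0] onto
   its counterpart, since for these algebras that ideal is the set of X with
   [X, [L, L]] = 0.  Restricted to the ideal it is a linear bijection T with
   T U = phi(U) T for U in V, where phi : V -> V' is its linear part; as phi
   maps (P, Q) to a basis obeying the relations, T P = P' T and T Q = Q' T.
   Comparing (3,0) blocks then shows that the (0,0) block of T conjugates
   (A, B) to (A', B').  Conversely, similar pairs give block-diagonally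
   conjugate (P, Q), hence isomorphic Lie algebras. *)

From HB Require Import structures.
From mathcomp Require Import all_boot all_order all_algebra.
From mathcomp Require Import zify.
Set Implicit Arguments. Unset Strict Implicit. Unset Printing Implicit Defensive.
Import GRing.Theory.
Local Open Scope ring_scope.

Lemma scalemx_injl (F : fieldType) m n (X : 'M[F]_(m, n)) a b :
  X != 0 -> a *: X = b *: X -> a = b.
Proof.
move=> nX /eqP; rewrite -subr_eq0 -scalerBl scalemx_eq0 (negbTE nX) orbF.
by rewrite subr_eq0 => /eqP.
Qed.

Lemma mx_cV_ext (F : fieldType) m n (X Y : 'M[F]_(m, n)) :
  (forall e : 'cV[F]_n, X *m e = Y *m e) -> X = Y.
Proof.
move=> eXY; apply/matrixP => i j.
by move/matrixP: (eXY (delta_mx j 0)) => /(_ i 0); rewrite -!colE !mxE.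
Qed.

Lemma mulmx_eigen (F : fieldType) m n (X Y : 'M[F]_m) (e : 'M[F]_(m, n)) s t :
  X *m e = s *: e -> Y *m e = t *: e -> X *m Y *m e = (s * t) *: e.
Proof. by move=> Xe Ye; rewrite -mulmxA Ye -scalemxAr Xe scalerA mulrC. Qed.

Lemma eq_pow4_pow3 (F : fieldType) (x : F) :
  x * x * x * x = x * x * x -> x = 0 \/ x = 1.
Proof.
move/eqP; rewrite -subr_eq0 -{2}[x * x * x]mulr1 -mulrBr mulf_eq0 subr_eq0.
by rewrite !mulf_eq0 !orbb => /orP[]/eqP; [left | right].
Qed.

Lemma intertwine_mul (F : fieldType) N (T X Y X' Y' : 'M[F]_N) :
  T *m X = X' *m T -> T *m Y = Y' *m T -> T *m (X *m Y) = X' *m Y' *m T.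
Proof. by move=> TX TY; rewrite mulmxA TX -mulmxA TY mulmxA. Qed.

Lemma intertwine_addKr (F : fieldType) N (T Y Z Y' Z' : 'M[F]_N) :
  T *m Y = Y' *m T -> T *m (Y + Z) = (Y' + Z') *m T -> T *m Z = Z' *m T.
Proof. by move=> TY; rewrite mulmxDr mulmxDl TY => /addrI. Qed.

Lemma linear_cV_unitmx (F : fieldType) N (t : 'cV[F]_N -> 'cV[F]_N) :
    (forall c u v, t (c *: u + v) = c *: t u + t v) -> injective t ->
  exists2 T, T \in unitmx & forall w, T *m w = t w.
Proof.
move=> tlin tinj.
have t0 : t 0 = 0.
  by apply: (addrI (t 0)); rewrite addr0 -{1}[t 0]scale1r -tlin scale1r addr0.
have tZ c u : t (c *: u) = c *: t u by rewrite -[c *: u]addr0 tlin t0 addr0.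
have tD : {morph t : u v / u + v} by move=> u v; rewrite -{1}[u]scale1r tlin scale1r.
pose T : 'M[F]_N := \matrix_(i, j) t (delta_mx j 0) i 0.
have hT w : T *m w = t w.
  rewrite {2}[w]matrix_sum_delta; under eq_bigr do rewrite big_ord1.
  rewrite (big_morph t tD t0).
  apply/matrixP => i l; rewrite !mxE summxE; apply: eq_bigr => j _.
  by rewrite tZ !mxE ord1 mulrC.
exists T => //; rewrite unitmxE unitfE -det_tr; apply/det0P => -[v nv vT0].
have : t v^T = t 0 by rewrite -hT -[T]trmxK -trmx_mul vT0 trmx0 t0.
by move/tinj/(congr1 trmx); rewrite trmxK trmx0 => v0; rewrite v0 eqxx in nv.
Qed.

(** * Block matrices *)

Lemma nceval_conj (F : fieldType) n (S S' A B : 'M[F]_n) p : S' *m S = 1%:M ->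
  nceval (S' *m A *m S) (S' *m B *m S) p = S' *m nceval A B p *m S.
Proof.
move=> S'S; elim: p => [c| | |p IHp q IHq|p IHp q IHq] //=.
- by rewrite mul_mx_scalar -scalemxAl S'S scalemx1.
- by rewrite IHp IHq mulmxDr mulmxDl.
- by rewrite IHp IHq -!mulmxA (mulmxA S) (mulmx1C S'S) mul1mx.
Qed.

Section Blocks.
Variables (F : fieldType) (k n : nat).
Local Notation m := n.+1.
Local Notation N := (k * n.+1)%N.

Lemma blkidx_lt (i : 'I_k) (r : 'I_m) : (i * m + r < N)%N.
Proof. have := ltn_ord i; have := ltn_ord r; nia. Qed.

Definition blkidx (i : 'I_k) (r : 'I_m) : 'I_N := Ordinal (blkidx_lt i r).

Lemma blknum_lt (a : 'I_N) : (a %/ m < k)%N.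
Proof. by rewrite ltn_divLR. Qed.
Definition blknum (a : 'I_N) : 'I_k := Ordinal (blknum_lt a).

Lemma blkoff_lt (a : 'I_N) : (a %% m < m)%N.
Proof. by rewrite ltn_pmod. Qed.
Definition blkoff (a : 'I_N) : 'I_m := Ordinal (blkoff_lt a).

Lemma blkidxK a : blkidx (blknum a) (blkoff a) = a.
Proof. by apply: val_inj; rewrite /= -divn_eq. Qed.

Lemma blknum_idx i r : blknum (blkidx i r) = i.
Proof. by apply: val_inj; rewrite /= divnMDl // divn_small // addn0. Qed.

Lemma blkoff_idx i r : blkoff (blkidx i r) = r.
Proof. by apply: val_inj; rewrite /= modnMDl modn_small. Qed.

Lemma eq_blkidx i r j c : (blkidx i r == blkidx j c) = (i == j) && (r == c).
Proof.
apply/eqP/andP => [e|[/eqP -> /eqP ->]] //.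
by split; apply/eqP;
  [rewrite -(blknum_idx i r) e blknum_idx | rewrite -(blkoff_idx i r) e blkoff_idx].
Qed.

Definition blkof (X : 'M[F]_N) (i j : 'I_k) : 'M[F]_m :=
  \matrix_(r, c) X (blkidx i r) (blkidx j c).

Definition blkmx (G : 'I_k -> 'I_k -> 'M[F]_m) : 'M[F]_N :=
  \matrix_(a, b) G (blknum a) (blknum b) (blkoff a) (blkoff b).

Lemma blkofK G i j : blkof (blkmx G) i j = G i j.
Proof. by apply/matrixP => r c; rewrite !mxE !blknum_idx !blkoff_idx. Qed.

Lemma blkof_inj (X Y : 'M[F]_N) :
  (forall i j, blkof X i j = blkof Y i j) -> X = Y.
Proof.
move=> eXY; apply/matrixP => a b; rewrite -(blkidxK a) -(blkidxK b).
move/matrixP: (eXY (blknum a) (blknum b)) => /(_ (blkoff a) (blkoff b)).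
by rewrite !mxE.
Qed.

Lemma sum_blkidx (G : 'I_N -> F) :
  \sum_(a < N) G a = \sum_(l < k) \sum_(r < m) G (blkidx l r).
Proof.
rewrite pair_bigA /= (reindex (fun p : 'I_k * 'I_m => blkidx p.1 p.2)) //.
exists (fun a => (blknum a, blkoff a)) => [[i r] _|a _] /=.
  by rewrite blknum_idx blkoff_idx.
by rewrite blkidxK.
Qed.

Lemma blkofM (X Y : 'M[F]_N) i j :
  blkof (X *m Y) i j = \sum_(l < k) blkof X i l *m blkof Y l j.
Proof.
apply/matrixP => r c; rewrite !mxE summxE sum_blkidx; apply: eq_bigr => l _.
by rewrite mxE; apply: eq_bigr => t _; rewrite !mxE.
Qed.

Lemma blkofD (X Y : 'M[F]_N) i j : blkof (X + Y) i j = blkof X i j + blkof Y i j.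
Proof. by apply/matrixP => r c; rewrite !mxE. Qed.

Lemma blkof1 i j : blkof 1%:M i j = if i == j then 1%:M else 0.
Proof.
apply/matrixP => r c; rewrite !mxE eq_blkidx.
by case: (i =P j) => _ /=; rewrite ?mxE.
Qed.

Lemma blkof_ncmx (M : nat -> nat -> ncpoly F) (A B : 'M[F]_m) i j :
  blkof (ncmx_eval k M A B) i j = nceval A B (M i j).
Proof.
apply/matrixP => r c; rewrite !mxE /= !divnMDl // !divn_small // !addn0.
by rewrite !modnMDl !modn_small // !inord_val.
Qed.

Definition blkdiag (S : 'M[F]_m) : 'M[F]_N :=
  blkmx (fun i j => if i == j then S else 0).

Lemma blkof_blkdiagMl S (X : 'M[F]_N) i j :
  blkof (blkdiag S *m X) i j = S *m blkof X i j.
Proof.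
rewrite blkofM (bigD1 i) //= blkofK eqxx big1 ?addr0 // => l il.
by rewrite blkofK eq_sym (negbTE il) mul0mx.
Qed.

Lemma blkof_blkdiagMr S (X : 'M[F]_N) i j :
  blkof (X *m blkdiag S) i j = blkof X i j *m S.
Proof.
rewrite blkofM (bigD1 j) //= blkofK eqxx big1 ?addr0 // => l lj.
by rewrite blkofK (negbTE lj) mulmx0.
Qed.

Lemma blkdiag1 : blkdiag 1%:M = 1%:M.
Proof. by apply: blkof_inj => i j; rewrite blkofK blkof1. Qed.

Lemma blkdiagM S S' : blkdiag S *m blkdiag S' = blkdiag (S *m S').
Proof.
by apply: blkof_inj => i j; rewrite blkof_blkdiagMl !blkofK; case: eqP; rewrite ?mulmx0.
Qed.

Definition blksingle (i j : 'I_k) (X : 'M[F]_m) : 'M[F]_N :=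
  blkmx (fun a b => if (a == i) && (b == j) then X else 0).

Lemma blkof_mulmx_single X i j (Y : 'M[F]_N) a b :
  blkof (Y *m blksingle i j X) a b = if b == j then blkof Y a i *m X else 0.
Proof.
rewrite blkofM (bigD1 i) //= blkofK eqxx big1 ?addr0 => [|l li].
  by case: eqP; rewrite ?andbT ?andbF ?mulmx0.
by rewrite blkofK (negbTE li) mulmx0.
Qed.

Lemma blkof_single_mulmx X i j (Y : 'M[F]_N) a b :
  blkof (blksingle i j X *m Y) a b = if a == i then X *m blkof Y j b else 0.
Proof.
rewrite blkofM (bigD1 j) //= blkofK eqxx andbT big1 ?addr0 => [|l lj].
  by case: eqP; rewrite ?mul0mx.
by rewrite blkofK (negbTE lj) andbF mul0mx.
Qed.

Lemma intertwine_blksingle (T : 'M[F]_N) X X' i j :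
    T *m blksingle i j X = blksingle i j X' *m T ->
  blkof T i i *m X = X' *m blkof T j j /\
  forall b, b != j -> X' *m blkof T j b = 0.
Proof.
move=> TX; split.
  have := congr1 (fun Z => blkof Z i j) TX.
  by rewrite blkof_mulmx_single blkof_single_mulmx !eqxx.
move=> b bj; have := congr1 (fun Z => blkof Z i b) TX.
by rewrite blkof_mulmx_single blkof_single_mulmx eqxx (negbTE bj).
Qed.
Lemma ncmx_eval_conj (S S' A B : 'M[F]_m) M : S' *m S = 1%:M ->
  blkdiag S' *m ncmx_eval k M A B *m blkdiag S =
  ncmx_eval k M (S' *m A *m S) (S' *m B *m S).
Proof.
move=> S'S; apply: blkof_inj => i j.
by rewrite blkof_blkdiagMr blkof_blkdiagMl !blkof_ncmx nceval_conj.
Qed.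

End Blocks.

(** * Word matrices *)

(* A word in x and y is a [seq bool], [true] standing for y; a sum of words
   is a [seq] of words. *)
Section Words.
Variables (F : fieldType) (n : nat) (A B : 'M[F]_n).

Definition mxword (w : seq bool) : 'M[F]_n :=
  foldr (fun b X => (if b then B else A) *m X) 1%:M w.

Definition ncword (w : seq bool) : ncpoly F :=
  foldr (fun b p => NCmul (if b then NCy else NCx) p) (NCc 1) w.

Definition ncsum (s : seq (seq bool)) : ncpoly F :=
  foldr (fun w p => NCadd (ncword w) p) (NCc 0) s.

Lemma mxword_cat u v : mxword (u ++ v) = mxword u *m mxword v.
Proof. by elim: u => [|b u IHu] /=; rewrite ?mul1mx // IHu mulmxA. Qed.

Lemma nceval_ncword w : nceval A B (ncword w) = mxword w.
Proof. by elim: w => [|b w IHw] //=; rewrite IHw; case: b. Qed.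

Lemma nceval_ncsum s : nceval A B (ncsum s) = \sum_(w <- s) mxword w.
Proof.
elim: s => [|w s IHs] /=; last by rewrite big_cons nceval_ncword IHs.
by rewrite big_nil raddf0.
Qed.

End Words.

Definition wordmx := nat -> nat -> seq (seq bool).

Definition wordmx_mul (k : nat) (S T : wordmx) : wordmx := fun i j =>
  flatten [seq [seq u ++ v | u <- S i l, v <- T l j] | l <- iota 0 k].

(* A boolean test, so that identities between word matrices are proved by
   evaluation. *)
Definition wordmx_perm_eq (k : nat) (S T : wordmx) : bool :=
  all (fun i => all (fun j => perm_eq (S i j) (T i j)) (iota 0 k)) (iota 0 k).

Definition ncmx_of (F : fieldType) (S : wordmx) (i j : nat) : ncpoly F :=
  ncsum F (S i j).

Definition wordmx_add (S T : wordmx) : wordmx := fun i j => S i j ++ T i j.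

Definition wordmx_single (i j : nat) (s : seq (seq bool)) : wordmx :=
  fun a b => if (a == i) && (b == j) then s else [::].

Section WordMatrices.
Variables (F : fieldType) (k n : nat) (A B : 'M[F]_n.+1).
Local Notation E S := (ncmx_eval k (ncmx_of F S) A B).

Lemma blkof_wordmx (S : wordmx) i j :
  blkof (E S) i j = \sum_(w <- S i j) mxword A B w.
Proof. by rewrite blkof_ncmx nceval_ncsum. Qed.

Lemma ncmx_eval_mul (S T : wordmx) : E S *m E T = E (wordmx_mul k S T).
Proof.
apply: blkof_inj => i j; rewrite blkofM blkof_wordmx big_flatten big_map /=.
have -> : iota 0 k = index_iota 0 k by rewrite /index_iota subn0.
rewrite big_mkord; apply: eq_bigr => l _.
rewrite !blkof_wordmx big_allpairs_dep.
rewrite mulmx_suml; apply: eq_bigr => u _; rewrite mulmx_sumr.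
by apply: eq_bigr => v _; rewrite mxword_cat.
Qed.

Lemma ncmx_eval_perm (S T : wordmx) : wordmx_perm_eq k S T -> E S = E T.
Proof.
move=> eST; apply: blkof_inj => i j; rewrite !blkof_wordmx; apply: perm_big.
have ik (l : 'I_k) : (l : nat) \in iota 0 k by rewrite mem_iota add0n ltn_ord.
exact: allP (allP eST i (ik i)) j (ik j).
Qed.

Lemma ncmx_eval_add (S T : wordmx) : E S + E T = E (wordmx_add S T).
Proof. by apply: blkof_inj => i j; rewrite blkofD !blkof_wordmx big_cat. Qed.

Lemma ncmx_eval_single (i j : 'I_k) s :
  E (wordmx_single i j s) = blksingle i j (\sum_(w <- s) mxword A B w).
Proof.
apply: blkof_inj => a b; rewrite blkof_wordmx blkofK /wordmx_single.
by case: ifP; rewrite ?big_nil.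
Qed.

Lemma ncmx_eval_nil : E (fun _ _ => [::]) = 0.
Proof.
apply: blkof_inj => i j; rewrite blkof_wordmx big_nil.
by apply/matrixP => r c; rewrite !mxE.
Qed.

Lemma ncmx_eval_neq0 (S : wordmx) (i j : 'I_k) : S i j = [:: [::]] -> E S != 0.
Proof.
move=> Sij; apply/eqP => ES0; have := blkof_wordmx S i j.
rewrite Sij big_seq1 ES0 => /matrixP/(_ 0 0); rewrite !mxE /= => /eqP.
by rewrite eq_sym oner_eq0.
Qed.

End WordMatrices.

(** * The Lie algebra L(V) *)

Section LieAlgebra.
Variables (F : fieldType) (N : nat).
Implicit Types (V W : 'M[F]_N) (u v w : 'cV[F]_N).

Definition Lmx V v : 'M[F]_(N + 1) := block_mx V v 0 0.

Lemma lie_Lmx V v W w :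
  lie (Lmx V v) (Lmx W w) = Lmx (V *m W - W *m V) (V *m w - W *m v).
Proof.
rewrite /lie /Lmx !mulmx_block !mulmx0 !mul0mx !addr0 opp_block_mx add_block_mx.
by rewrite !oppr0 !addr0.
Qed.

Lemma lie_Lmx0 V v w : lie (Lmx V v) (Lmx 0 w) = Lmx 0 (V *m w).
Proof. by rewrite lie_Lmx !mulmx0 !mul0mx !subr0. Qed.

Lemma Lmx0_inj : injective (Lmx 0).
Proof. by move=> v w /(congr1 ursubmx); rewrite !block_mxKur. Qed.

Lemma Lmx_scale_add c V v W w :
  c *: Lmx V v + Lmx W w = Lmx (c *: V + W) (c *: v + w).
Proof. by rewrite /Lmx scale_block_mx add_block_mx !scaler0 !addr0. Qed.

Lemma Lmx00 : Lmx 0 0 = 0.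
Proof. exact: block_mx0. Qed.

Section Span.
Variables P Q : 'M[F]_N.

Lemma inL_Lmx a b v : inL P Q (Lmx (a *: P + b *: Q) v).
Proof. by exists a, b, v. Qed.

Lemma inL_vec w : inL P Q (Lmx 0 w).
Proof. by exists 0, 0, w; rewrite !scale0r addr0. Qed.

Lemma inL_P : inL P Q (Lmx P 0).
Proof. by exists 1, 0, 0; rewrite scale1r scale0r addr0. Qed.

Lemma inL_Q : inL P Q (Lmx Q 0).
Proof. by exists 0, 1, 0; rewrite scale1r scale0r add0r. Qed.

Lemma inL0 : inL P Q 0.
Proof. by rewrite -Lmx00; apply: inL_vec. Qed.

Hypothesis cPQ : comm_mx P Q.

Lemma comm_mx_span a b c d : comm_mx (a *: P + b *: Q) (c *: P + d *: Q).
Proof.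
have cZ (R S : 'M[F]_N) e : comm_mx R S -> comm_mx R (e *: S).
  by rewrite /comm_mx -scalemxAl -scalemxAr => ->.
apply: comm_mx_sym; apply: comm_mxD; apply: (cZ); apply: comm_mx_sym;
  by apply: comm_mxD; apply: (cZ); rewrite ?comm_mx_refl //; apply: comm_mx_sym.
Qed.

Lemma lie_inL X Y : inL P Q X -> inL P Q Y -> exists u, lie X Y = Lmx 0 u.
Proof.
by move=> [a [b [v ->]]] [c [d [w ->]]]; rewrite lie_Lmx comm_mx_span subrr; eexists.
Qed.

Lemma inL_lie X Y : inL P Q X -> inL P Q Y -> inL P Q (lie X Y).
Proof. by move=> hX hY; have [u ->] := lie_inL hX hY; apply: inL_vec. Qed.

Lemma lie_vec_lie w Y Z : inL P Q Y -> inL P Q Z -> lie (Lmx 0 w) (lie Y Z) = 0.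
Proof.
move=> hY hZ; have [u ->] := lie_inL hY hZ.
by rewrite lie_Lmx !mulmx0 !mul0mx !subrr Lmx00.
Qed.

End Span.
End LieAlgebra.

(** * Wild pairs *)

Record wild_pair (F : fieldType) (N : nat) (P Q : 'M[F]_N) : Prop := WildPair {
  wild_comm : comm_mx P Q;
  wild_P4 : P *m P *m P *m P = P *m P *m P;
  wild_Q4 : Q *m Q *m Q *m Q = Q *m Q *m Q;
  wild_P2Q : P *m P *m Q = 0;
  wild_P3_neq0 : P *m P *m P != 0;
  wild_Q3P_neq0 : Q *m Q *m Q *m P != 0 }.

Section WildPair.
Variables (F : fieldType) (N : nat) (P Q : 'M[F]_N).
Hypothesis wPQ : wild_pair P Q.

Lemma wild_QP2 : Q *m P *m P = 0.
Proof. by rewrite -(wild_comm wPQ) -mulmxA -(wild_comm wPQ) mulmxA (wild_P2Q wPQ). Qed.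

Lemma wild_span_P3 a b : (a *: P + b *: Q) *m (P *m P *m P) = a *: (P *m P *m P).
Proof.
rewrite mulmxDl -!scalemxAl !mulmxA (wild_P4 wPQ) (wild_QP2) mul0mx.
by rewrite scaler0 addr0.
Qed.

Lemma wild_span_Q3P a b :
  (a *: P + b *: Q) *m (Q *m Q *m Q *m P) = b *: (Q *m Q *m Q *m P).
Proof.
have PQ3P : P *m (Q *m Q *m Q *m P) = 0.
  have cPQ3 : comm_mx P (Q *m Q *m Q).
    by apply: comm_mxM; first apply: comm_mxM; apply: wild_comm.
  by rewrite mulmxA cPQ3 -!mulmxA [Q *m (P *m P)]mulmxA wild_QP2 !mulmx0.
rewrite mulmxDl -!scalemxAl PQ3P !mulmxA (wild_Q4 wPQ) scaler0 add0r.
by rewrite -!mulmxA.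
Qed.

Lemma wild_span_free a b : a *: P + b *: Q = 0 -> a = 0 /\ b = 0.
Proof.
move=> e0; split.
  apply: (scalemx_injl (wild_P3_neq0 wPQ)).
  by rewrite -(wild_span_P3 a b) e0 mul0mx scale0r.
apply: (scalemx_injl (wild_Q3P_neq0 wPQ)).
by rewrite -(wild_span_Q3P a b) e0 mul0mx scale0r.
Qed.

Lemma wild_neq0 : P != 0 /\ Q != 0.
Proof.
split; first by apply: contraNneq (wild_P3_neq0 wPQ) => ->; rewrite !mul0mx.
by apply: contraNneq (wild_Q3P_neq0 wPQ) => ->; rewrite !mul0mx.
Qed.

Lemma wild_eigenvalues (e : 'M[F]_N) x y : e != 0 ->
  P *m e = x *: e -> Q *m e = y *: e ->
  [/\ x = 0 \/ x = 1, y = 0 \/ y = 1 & x * y = 0].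
Proof.
move=> ne Pe Qe.
have P2e := mulmx_eigen Pe Pe; have P3e := mulmx_eigen P2e Pe.
have Q2e := mulmx_eigen Qe Qe; have Q3e := mulmx_eigen Q2e Qe.
have P2Qe := mulmx_eigen P2e Qe.
split.
- apply: eq_pow4_pow3; apply: (scalemx_injl ne).
  by rewrite -(mulmx_eigen P3e Pe) -P3e (wild_P4 wPQ).
- apply: eq_pow4_pow3; apply: (scalemx_injl ne).
  by rewrite -(mulmx_eigen Q3e Qe) -Q3e (wild_Q4 wPQ).
have : x * x * y = 0.
  by apply: (scalemx_injl ne); rewrite -P2Qe (wild_P2Q wPQ) mul0mx scale0r.
by move/eqP; rewrite !mulf_eq0 orbb => /orP[]/eqP->; rewrite ?mul0r ?mulr0.
Qed.

Lemma wild_pair_swap : ~ wild_pair Q P.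
Proof.
move=> wQP; move/negP: (wild_Q3P_neq0 wPQ); apply.
by rewrite -!mulmxA [Q *m (Q *m P)]mulmxA (wild_P2Q wQP) !mulmx0.
Qed.

Lemma wild_center X : inL P Q X ->
    (forall Y Z, inL P Q Y -> inL P Q Z -> lie X (lie Y Z) = 0) ->
  exists w, X = Lmx 0 w.
Proof.
move=> [a [b [v ->]]] cX; set V := a *: P + b *: Q.
have VU U : inL P Q (Lmx U 0) -> V *m U = 0.
  move=> hU; apply: mx_cV_ext => e; rewrite mul0mx -mulmxA.
  by have := cX _ _ hU (inL_vec P Q e); rewrite !lie_Lmx0 -Lmx00 => /Lmx0_inj.
have a0 : a = 0.
  apply: (scalemx_injl (wild_P3_neq0 wPQ)).
  by rewrite scale0r -(wild_span_P3 a b) !mulmxA (VU _ (inL_P P Q)) !mul0mx.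
have b0 : b = 0.
  apply: (scalemx_injl (wild_Q3P_neq0 wPQ)).
  by rewrite scale0r -(wild_span_Q3P a b) !mulmxA (VU _ (inL_Q P Q)) !mul0mx.
by exists v; rewrite /V a0 b0 !scale0r addr0.
Qed.

End WildPair.

Lemma wild_pair_intertwine (F : fieldType) N (T P Q P' Q' : 'M[F]_N) :
    T \in unitmx -> T *m P = P' *m T -> T *m Q = Q' *m T ->
  wild_pair P Q -> wild_pair P' Q'.
Proof.
move=> Tu TP TQ [cPQ P4 Q4 P2Q P3 Q3P].
have canc X Y : X *m T = Y *m T -> X = Y.
  by move=> eXY; rewrite -(mulmxK Tu X) eXY mulmxK.
have neq0 X X' : T *m X = X' *m T -> X != 0 -> X' != 0.
  move=> TX; apply: contraNneq => X'0.
  by rewrite -(mulKmx Tu X) TX X'0 mul0mx mulmx0.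
have TPP := intertwine_mul TP TP; have TP3 := intertwine_mul TPP TP.
have TQQ := intertwine_mul TQ TQ; have TQ3 := intertwine_mul TQQ TQ.
split.
- by apply: canc; rewrite -(intertwine_mul TP TQ) -(intertwine_mul TQ TP) cPQ.
- by apply: canc; rewrite -(intertwine_mul TP3 TP) -TP3 P4.
- by apply: canc; rewrite -(intertwine_mul TQ3 TQ) -TQ3 Q4.
- by apply: canc; rewrite -(intertwine_mul TPP TQ) P2Q mulmx0 mul0mx.
- exact: neq0 TP3 P3.
- exact: neq0 (intertwine_mul TQ3 TP) Q3P.
Qed.

Lemma wild_intertwiner_basis (F : fieldType) N (T P Q P' Q' : 'M[F]_N) a b c d :
    wild_pair P Q -> wild_pair P' Q' -> T \in unitmx ->
    T *m P = (a *: P' + b *: Q') *m T -> T *m Q = (c *: P' + d *: Q') *m T ->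
  [/\ a = 1, b = 0, c = 0 & d = 1].
Proof.
move=> wPQ wPQ' Tu TP TQ; have w2 := wild_pair_intertwine Tu TP TQ wPQ.
have [a01 c01 ac0] := wild_eigenvalues w2 (wild_P3_neq0 wPQ')
  (wild_span_P3 wPQ' a b) (wild_span_P3 wPQ' c d).
have [b01 d01 bd0] := wild_eigenvalues w2 (wild_Q3P_neq0 wPQ')
  (wild_span_Q3P wPQ' a b) (wild_span_Q3P wPQ' c d).
have [nP2 nQ2] := wild_neq0 w2.
have [a0|a1] := a01.
  exfalso; apply: (wild_pair_swap wPQ').
  have b1 : b = 1 by case: b01 => // b0; move: nP2; rewrite a0 b0 !scale0r addr0 eqxx.
  have d0 : d = 0 by move: bd0; rewrite b1 mul1r.
  have c1 : c = 1 by case: c01 => // c0; move: nQ2; rewrite c0 d0 !scale0r addr0 eqxx.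
  by move: w2; rewrite a0 b1 c1 d0 !scale0r !scale1r add0r addr0.
have c0 : c = 0 by move: ac0; rewrite a1 mul1r.
have d1 : d = 1 by case: d01 => // d0; move: nQ2; rewrite c0 d0 !scale0r addr0 eqxx.
by split=> //; move: bd0; rewrite d1 mulr1.
Qed.

(** * Lie isomorphisms *)

Lemma LieIso_intertwiner (F : fieldType) N (P Q P' Q' : 'M[F]_N) :
    comm_mx P Q -> wild_pair P' Q' -> LieIso P Q P' Q' ->
  exists T a b c d, [/\ T \in unitmx,
    T *m P = (a *: P' + b *: Q') *m T & T *m Q = (c *: P' + d *: Q') *m T].
Proof.
move=> cPQ wPQ' [f [fL flin fbr finj fsurj]].
have f0 : f 0 = 0.
  apply: (addrI (f 0)); rewrite addr0 -{1}[f 0]scale1r -flin ?scale1r ?addr0 //;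
    exact: inL0.
have fvec w : exists w', f (Lmx 0 w) = Lmx 0 w'.
  apply: (wild_center wPQ' (fL _ (inL_vec P Q w))) => Y Z hY hZ.
  have [Y0 hY0 <-] := fsurj _ hY; have [Z0 hZ0 <-] := fsurj _ hZ.
  rewrite -(fbr Y0 Z0) // -(fbr _ _ (inL_vec P Q w) (inL_lie cPQ hY0 hZ0)).
  by rewrite (lie_vec_lie cPQ) // f0.
pose t w := ursubmx (f (Lmx 0 w)).
have ft w : f (Lmx 0 w) = Lmx 0 (t w).
  by have [w' fw] := fvec w; rewrite /t fw block_mxKur.
have tlin c u v : t (c *: u + v) = c *: t u + t v.
  have L0 u' v' : c *: Lmx 0 u' + Lmx 0 v' = Lmx 0 (c *: u' + v').
    by rewrite Lmx_scale_add scaler0 addr0.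
  by apply: Lmx0_inj; rewrite -ft -L0 flin ?ft ?L0 //; apply: inL_vec.
have tinj : injective t.
  move=> u v tuv; apply: Lmx0_inj; apply: finj; try exact: inL_vec.
  by rewrite !ft tuv.
have [T Tu hT] := linear_cV_unitmx tlin tinj.
have intertwine U V h : inL P Q (Lmx U 0) -> f (Lmx U 0) = Lmx V h ->
    T *m U = V *m T.
  move=> hU fU; apply: mx_cV_ext => e; rewrite -!mulmxA !hT.
  have := fbr _ _ hU (inL_vec P Q e); rewrite lie_Lmx0 !ft fU lie_Lmx0.
  exact: Lmx0_inj.
have [a [b [v fP]]] := fL _ (inL_P P Q).
have [c [d [w fQ]]] := fL _ (inL_Q P Q).
by exists T, a, b, c, d; split => //; apply: intertwine; rewrite ?fP ?fQ //;
  [apply: inL_P | apply: inL_Q].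
Qed.

Lemma LieIso_conj (F : fieldType) N (P Q S S' : 'M[F]_N) : S *m S' = 1%:M ->
  LieIso P Q (S' *m P *m S) (S' *m Q *m S).
Proof.
move=> SS'; have S'S := mulmx1C SS'.
set R : 'M[F]_(N + 1) := block_mx S 0 0 1%:M.
set Ri : 'M[F]_(N + 1) := block_mx S' 0 0 1%:M.
have RRi : R *m Ri = 1%:M.
  rewrite mulmx_block !mulmx0 !mul0mx !addr0 !add0r mulmx1 SS'.
  by rewrite -scalar_mx_block.
pose f X := Ri *m X *m R.
have fLmx V v : f (Lmx V v) = Lmx (S' *m V *m S) (S' *m v).
  rewrite /f /Lmx !mulmx_block !mulmx0 !mul0mx !addr0 !add0r !mulmx1.
  by congr block_mx; rewrite mul0mx.
have fspan a b : S' *m (a *: P + b *: Q) *m S =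
    a *: (S' *m P *m S) + b *: (S' *m Q *m S).
  by rewrite mulmxDr mulmxDl -!scalemxAr -!scalemxAl.
have fM X Y : f (X *m Y) = f X *m f Y.
  by rewrite /f !mulmxA -[Ri *m X *m R *m Ri]mulmxA RRi mulmx1.
have fK X : R *m f X *m Ri = X.
  by rewrite /f !mulmxA RRi mul1mx -mulmxA RRi mulmx1.
exists f; split.
- by move=> X [a [b [v ->]]]; rewrite fLmx fspan; apply: inL_Lmx.
- by move=> c X Y _ _; rewrite /f mulmxDr mulmxDl -scalemxAr -scalemxAl.
- by move=> X Y _ _; rewrite /lie /f mulmxBr mulmxBl -!/(f _) !fM.
- by move=> X Y _ _ fXY; rewrite -(fK X) fXY fK.
move=> Z [a [b [v ->]]]; exists (Lmx (a *: P + b *: Q) (S *m v)).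
  exact: inL_Lmx.
by rewrite fLmx fspan mulmxA S'S mul1mx.
Qed.

(** * The wild family *)

(* Blocks 0-3 carry (A, B); the idempotent blocks (4,4) of P and (5,5), (6,6)
   of Q, linked by the (6,5) block of P, provide the joint eigenvectors P^3 and
   Q^3 P. *)
Definition wordP : wordmx := fun i j =>
  match i, j with
  | 1, 0 | 3, 1 | 4, 4 | 6, 5 => [:: [::]]
  | 3, 2 => [:: [:: false]]
  | _, _ => [::]
  end.

Definition wordQ : wordmx := fun i j =>
  match i, j with
  | 2, 0 | 5, 5 | 6, 6 => [:: [::]]
  | 3, 1 => [:: [:: false]]
  | 3, 2 => [:: [:: true]]
  | _, _ => [::]
  end.

Section WildFamily.
Variables (F : fieldType) (n : nat).
Local Notation E S A B := (ncmx_eval 7 (ncmx_of F S) A B).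
Local Notation "''b_' i" := (@Ordinal 7 i isT) (at level 0, i at level 0).

Lemma wild_pair_eval (A B : 'M[F]_n.+1) : wild_pair (E wordP A B) (E wordQ A B).
Proof.
split; rewrite /comm_mx ?ncmx_eval_mul; try by apply: ncmx_eval_perm.
- by rewrite -(ncmx_eval_nil 7 A B); apply: ncmx_eval_perm.
- by apply: (ncmx_eval_neq0 _ _ (i := 'b_4) (j := 'b_4)).
- by apply: (ncmx_eval_neq0 _ _ (i := 'b_6) (j := 'b_5)).
Qed.

Lemma wild_blk30 (A B : 'M[F]_n.+1) :
  let P := E wordP A B in let Q := E wordQ A B in
  [/\ P *m P = P *m P *m P + blksingle 'b_3 'b_0 1%:M,
      P *m Q = Q *m Q *m P + blksingle 'b_3 'b_0 A &
      Q *m Q = Q *m Q *m Q + blksingle 'b_3 'b_0 B].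
Proof.
have E30 w X : mxword A B w = X ->
    blksingle 'b_3 'b_0 X = E (wordmx_single 3 0 [:: w]) A B.
  by move=> <-; rewrite (ncmx_eval_single A B 'b_3 'b_0) big_seq1.
split; rewrite !ncmx_eval_mul.
- by rewrite (E30 [::]) // ncmx_eval_add; apply: ncmx_eval_perm.
- by rewrite (E30 [:: false]) /= ?mulmx1 // ncmx_eval_add; apply: ncmx_eval_perm.
by rewrite (E30 [:: true]) /= ?mulmx1 // ncmx_eval_add; apply: ncmx_eval_perm.
Qed.

Lemma wild_intertwiner_similar (A B A' B' : 'M[F]_n.+1) T : T \in unitmx ->
    T *m E wordP A B = E wordP A' B' *m T ->
    T *m E wordQ A B = E wordQ A' B' *m T ->
  similar_pair A B A' B'.
Proof.
move=> Tu TP TQ.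
have [PP PQ QQ] := wild_blk30 A B; have [PP' PQ' QQ'] := wild_blk30 A' B'.
have TPP := intertwine_mul TP TP; have TQQ := intertwine_mul TQ TQ.
have TJ : T *m blksingle 'b_3 'b_0 1%:M = blksingle 'b_3 'b_0 1%:M *m T.
  by apply: (intertwine_addKr (intertwine_mul TPP TP)); rewrite -PP -PP'.
have TJA : T *m blksingle 'b_3 'b_0 A = blksingle 'b_3 'b_0 A' *m T.
  apply: (intertwine_addKr (intertwine_mul TQQ TP)); rewrite -PQ -PQ'.
  exact: intertwine_mul TP TQ.
have TJB : T *m blksingle 'b_3 'b_0 B = blksingle 'b_3 'b_0 B' *m T.
  by apply: (intertwine_addKr (intertwine_mul TQQ TQ)); rewrite -QQ -QQ'.
have [T30 _] := intertwine_blksingle TJ.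
have [T30A _] := intertwine_blksingle TJA; have [T30B _] := intertwine_blksingle TJB.
(* T^-1 also commutes with the (3,0) unit block, so its first block row
   vanishes off the diagonal and its (0,0) block inverts that of T. *)
have UJ : invmx T *m blksingle 'b_3 'b_0 1%:M = blksingle 'b_3 'b_0 1%:M *m invmx T.
  by rewrite -[RHS](mulKmx Tu) [T *m (_ *m _)]mulmxA TJ mulmxK.
have [_ U0] := intertwine_blksingle UJ.
have UT00 : blkof (invmx T) 'b_0 'b_0 *m blkof T 'b_0 'b_0 = 1%:M.
  have := congr1 (fun Z => blkof Z 'b_0 'b_0) (mulVmx Tu).
  rewrite blkofM blkof1 eqxx (bigD1 'b_0) //= big1 ?addr0 // => l l0.
  by rewrite -[blkof (invmx T) _ _]mul1mx U0 // mul0mx.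
have [_ T00u] := mulmx1_unit UT00.
rewrite mulmx1 mul1mx in T30; rewrite T30 in T30A T30B.
exists (invmx (blkof T 'b_0 'b_0)); first by rewrite unitmx_inv.
by rewrite invmxK T30A T30B !mulmxK.
Qed.

End WildFamily.

Theorem theorem2 (F : fieldType) (hF : exists x : F, x != 0 /\ x != 1) :
  comm2_Lie_wild F.
Proof.
exists 7%N, (ncmx_of F wordP), (ncmx_of F wordQ); split.
  by move=> n A B; have wPQ := wild_pair_eval A B; split;
    [apply: wild_comm wPQ | apply: wild_span_free].
move=> n A B A' B'; split.
  have wPQ := wild_pair_eval A B; have wPQ' := wild_pair_eval A' B'.
  case/(LieIso_intertwiner (wild_comm wPQ) wPQ') => [T [a [b [c [d [Tu TP TQ]]]]]].
  have [a1 b0 c0 d1] := wild_intertwiner_basis wPQ wPQ' Tu TP TQ.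
  move: TP TQ; rewrite a1 b0 c0 d1 !scale1r !scale0r addr0 add0r.
  exact: wild_intertwiner_similar.
case=> S Su [<- <-].
have conj M := @ncmx_eval_conj F 7 n S (invmx S) A B M (mulVmx Su).
rewrite -!conj.
by apply: LieIso_conj; rewrite blkdiagM mulmxV // blkdiag1.
Qed.
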